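(* Under the multi-view latent factor model described in the context, let $\eta(x)=\mathbb{P}(Y=1\mid X=x)$ be the regression function of the label on a single view, and let $f^\ast(x)=1$ if $\eta(x)\ge 1/2$ and $f^\ast(x)=-1$ otherwise be the Bayes classification rule. Then there exist functions $\tilde\eta$ and $\tilde f^\ast$ on $\mathbb{R}^K$ such that $\eta(x)=\tilde\eta(U^Tx)$ and $f^\ast(x)=\tilde f^\ast(U^Tx)$ for all $x$.
   Context: Multi-view latent factor model: a sample consists of a latent vector $Z\in\mathbb{R}^K$, a label $Y\in\{-1,1\}$, and views $X\in\mathbb{R}^d$. The pair $(Z,Y)$ is drawn from a distribution $\pi(Z,Y)$ such that the conditional distribution of $Z$ given $Y$ has a density. Given $Z$, the views are drawn independently from a continuous conditional distribution $f(X\mid Z)$ of factor form $X=BZ+\epsilon$, where $B=(b_1,\dots,b_K)\in\mathbb{R}^{d\times K}$, $\epsilon$ is a mean-zero random vector independent of $Z$ (independent across views and samples), $B^TB=\Lambda=\mathrm{diag}(\lambda_1,\dots,\lambda_K)$ with $\lambda_1\ge\dots\ge\lambda_K>0$, $\mathrm{Var}(Z)=I_K$, and $(I_d-B(B^TB)^{-1}B^T)\epsilon$ is independent of $B^T\epsilon$. The label $Y$ is conditionally independent of the views given $Z$. Write $U=B\Lambda^{-1/2}$. *)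

From HB Require Import structures.
From mathcomp Require Import all_boot all_order all_algebra.
From mathcomp Require Import all_classical all_reals all_analysis.

Set Implicit Arguments.
Unset Strict Implicit.
Unset Printing Implicit Defensive.

Import Order.TTheory GRing.Theory Num.Theory.
Local Open Scope classical_set_scope.
Local Open Scope ring_scope.

Section Defs.
Context {R : realType}.

(* Borel sigma-algebra on R^n (column vectors 'cV[R]_n): the sigma-algebra
   generated by the coordinate projections (= product Borel sigma-algebra). *)
Definition cborel (n : nat) : set (set 'cV[R]_n) :=
  <<s [set S | exists (i : 'I_n) (B : set R),
               measurable B /\ S = (fun x : 'cV[R]_n => x i ord0) @^-1` B] >>.

Definition cborel_fun (n : nat) (g : 'cV[R]_n -> R) : Prop :=
  forall B : set R, measurable B -> cborel (g @^-1` B).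

Definition box (n : nat) (a b : 'cV[R]_n) : set 'cV[R]_n :=
  [set x | forall i : 'I_n, a i ord0 <= x i ord0 <= b i ord0].

Definition box_vol (n : nat) (a b : 'cV[R]_n) : R :=
  \prod_(i < n) Num.max 0 (b i ord0 - a i ord0).

Definition lebesgue_null (n : nat) (N : set 'cV[R]_n) : Prop :=
  forall e : R, 0 < e ->
    exists a b : nat -> 'cV[R]_n,
      N `<=` \bigcup_k box (a k) (b k) /\
      (\sum_(0 <= k <oo) (box_vol (a k) (b k))%:E <= e%:E)%E.

Context {dT : measure_display} {T : measurableType dT} (P : probability T R).

Definition rvec (n : nat) (V : T -> 'cV[R]_n) : Prop :=
  forall i : 'I_n, measurable_fun setT (fun w => V w i ord0).

(* the law of V is absolutely continuous w.r.t. Lebesgue measure on R^n,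
   i.e. V has a density *)
Definition has_density (n : nat) (V : T -> 'cV[R]_n) : Prop :=
  forall N, cborel N -> lebesgue_null N -> P (V @^-1` N) = 0%E.

Definition indep2 (n p : nat) (V : T -> 'cV[R]_n) (W : T -> 'cV[R]_p) : Prop :=
  forall A B, cborel A -> cborel B ->
    P (V @^-1` A `&` W @^-1` B) = (P (V @^-1` A) * P (W @^-1` B))%E.

Definition mutual_indep (K d m : nat) (Z : T -> 'cV[R]_K)
    (E : 'I_m -> T -> 'cV[R]_d) : Prop :=
  forall (C : set 'cV[R]_K) (B : 'I_m -> set 'cV[R]_d),
    cborel C -> (forall j, cborel (B j)) ->
    P (Z @^-1` C `&` \bigcap_(j in [set: 'I_m]) (E j @^-1` B j)) =
    (P (Z @^-1` C) * \prod_(j < m) P (E j @^-1` B j))%E.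

(* g (a Borel function on R^n) is a version of the conditional probability
   P(Ev | V = .), i.e. g(V) is a version of P(Ev | sigma(V)) *)
Definition cond_prob_version (n : nat) (V : T -> 'cV[R]_n) (Ev : set T)
    (g : 'cV[R]_n -> R) : Prop :=
  cborel_fun g /\
  forall C, cborel C ->
    P (Ev `&` V @^-1` C) = (\int[P]_(w in V @^-1` C) (g (V w))%:E)%E.

Definition cond_indep (K d m : nat) (Y : T -> R)
    (X : 'I_m -> T -> 'cV[R]_d) (Z : T -> 'cV[R]_K) : Prop :=
  forall (A : set R) (B : 'I_m -> set 'cV[R]_d),
    measurable A -> (forall j, cborel (B j)) ->
    exists g h : 'cV[R]_K -> R,
      cond_prob_version Z (Y @^-1` A) g /\
      cond_prob_version Z (\bigcap_(j in [set: 'I_m]) (X j @^-1` B j)) h /\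
      forall C, cborel C ->
        P (Y @^-1` A `&` \bigcap_(j in [set: 'I_m]) (X j @^-1` B j)
             `&` Z @^-1` C) =
        (\int[P]_(w in Z @^-1` C) (g (Z w) * h (Z w))%:E)%E.

End Defs.

From HB Require Import structures.
From mathcomp Require Import all_boot all_order all_algebra.
From mathcomp Require Import all_classical all_reals all_analysis.
From mathcomp Require Import measurable_realfun.

Import Order.TTheory GRing.Theory Num.Theory.
Local Open Scope classical_set_scope.
Local Open Scope ring_scope.

Set Implicit Arguments.
Unset Strict Implicit.
Unset Printing Implicit Defensive.

(* Let Q be the orthogonal projection onto the complement of the column space
   of B, and put V = U^T X and W = Q X.  Since QB = 0 we have W = Q eps and
   X = U V + W.  Now (Z, B^T eps) is independent of Q eps, so (Z, V) is
   independent of W; together with the conditional independence of Y and X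
   given Z this gives P(Y = 1, V in D, W in E) = P(Y = 1, V in D) P(W in E).
   A pi-lambda argument on rectangles then shows that a version eta~ of
   P(Y = 1 | V) is also a version of P(Y = 1 | V, W), hence, X being a
   function of (V, W), eta~ o U^T is a version of P(Y = 1 | X). *)

(** * Column vectors as a measurable space *)

Definition cvec_coord_preimages (R : realType) (n : nat) : set (set 'cV[R]_n) :=
  [set S | exists (i : 'I_n) (B : set R),
     measurable B /\ S = (fun x : 'cV[R]_n => x i ord0) @^-1` B].

Definition cvec (R : realType) (n : nat) := 'cV[R]_n.
HB.instance Definition _ (R : realType) n := Choice.on (cvec R n).
HB.instance Definition _ (R : realType) n := isPointed.Build (cvec R n) 0.

(* The measurable sets of [cvB R n] are, by conversion, the sets satisfying
   [cborel]. *)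
Definition cvB (R : realType) (n : nat) :=
  g_sigma_algebraType (@cvec_coord_preimages R n : set (set (cvec R n))).

Section column_vectors.
Variable R : realType.

Lemma measurable_coord n (i : 'I_n) :
  measurable_fun setT (fun x : cvB R n => x i ord0).
Proof. by move=> _ B mB; rewrite setTI; apply: sub_sigma_algebra; exists i, B. Qed.

Lemma measurable_cvB d (T : measurableType d) n (V : T -> cvB R n) :
  (forall i, measurable_fun setT (fun w => V w i ord0)) -> measurable_fun setT V.
Proof.
move=> mV.
apply: (measurability (@cvec_coord_preimages R n : set (set (cvB R n)))) => //.
by move=> _ [_ [i [B [mB ->]]] <-]; have := mV i measurableT B mB; rewrite setTI.
Qed.

Lemma measurable_mulmx d (T : measurableType d) n p (M : 'M[R]_(p, n))
    (V : T -> cvB R n) :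
  measurable_fun setT V -> measurable_fun setT (fun w => M *m V w : cvB R p).
Proof.
move=> mV; apply: measurable_cvB => i; under eq_fun do rewrite mxE.
apply: measurable_sum => k; apply: measurable_funM; first exact: measurable_cst.
exact: measurableT_comp (measurable_coord k) mV.
Qed.

Lemma measurable_addmx d (T : measurableType d) n (V1 V2 : T -> cvB R n) :
  measurable_fun setT V1 -> measurable_fun setT V2 ->
  measurable_fun setT (fun w => V1 w + V2 w : cvB R n).
Proof.
move=> mV1 mV2; apply: measurable_cvB => i; under eq_fun do rewrite mxE.
by apply: measurable_funD; exact: measurableT_comp (measurable_coord i) _.
Qed.

Lemma measurable_mulmxl n p (M : 'M[R]_(p, n)) :
  measurable_fun setT (fun x : cvB R n => M *m x : cvB R p).
Proof. by have := measurable_mulmx M (@measurable_id _ (cvB R n) setT). Qed.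

Lemma cborel_funP n (g : 'cV[R]_n -> R) :
  cborel_fun g <-> measurable_fun setT (g : cvB R n -> R).
Proof.
split=> [mg _ B mB | mg B mB]; first by rewrite setTI; exact: mg.
by rewrite -[X in cborel X]setTI; exact: mg.
Qed.

End column_vectors.

(** * Image measures, densities and independence *)

Lemma measurable_preimage d d' (T : measurableType d) (T' : measurableType d')
    (f : T -> T') A :
  measurable_fun setT f -> measurable A -> measurable (f @^-1` A).
Proof. by move=> mf mA; rewrite -[X in measurable X]setTI; exact: mf. Qed.

(* [image_measure] and [density_measure] take the side conditions of their
   construction as (otherwise unused) arguments, so that their measure
   instances can be canonical. *)
Definition image_measure d d' (T1 : measurableType d) (T2 : measurableType d')
    (R : realType) (m : set T1 -> \bar R) (f : T1 -> T2)
    of measurable_fun setT f :=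
  pushforward m f.

Section image_measure.
Context d d' (T1 : measurableType d) (T2 : measurableType d') (R : realType).
Variables (m : {measure set T1 -> \bar R}) (f : T1 -> T2).
Hypothesis mf : measurable_fun setT f.

Let image_measure0 : image_measure m mf set0 = 0%E.
Proof. exact: measure0. Qed.

Let image_measure_ge0 A : (0 <= image_measure m mf A)%E.
Proof. exact: measure_ge0. Qed.

Let image_measure_sigma_additive : semi_sigma_additive (image_measure m mf).
Proof. exact: measure_semi_sigma_additive. Qed.

HB.instance Definition _ := isMeasure.Build _ _ _ (image_measure m mf)
  image_measure0 image_measure_ge0 image_measure_sigma_additive.

End image_measure.

Section finite_image_measure.
Context d d' (T1 : measurableType d) (T2 : measurableType d') (R : realType).
Variables (m : {finite_measure set T1 -> \bar R}) (f : T1 -> T2).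
Hypothesis mf : measurable_fun setT f.

Let image_measure_fin : fin_num_fun (image_measure m mf).
Proof.
by move=> A mA; apply: fin_num_measure; rewrite -[X in measurable X]setTI; exact: mf.
Qed.

HB.instance Definition _ :=
  @Measure_isFinite.Build _ _ _ (image_measure m mf) image_measure_fin.

End finite_image_measure.

Definition density_measure d (T : measurableType d) (R : realType)
    (mu : set T -> \bar R) (f : T -> \bar R)
    of measurable_fun setT f & (forall x, (0 <= f x)%E) :=
  fun A => (\int[mu]_(x in A) f x)%E.

Section density_measure.
Context d (T : measurableType d) (R : realType).
Variables (mu : {measure set T -> \bar R}) (f : T -> \bar R).
Hypotheses (mf : measurable_fun setT f) (f0 : forall x, (0 <= f x)%E).

Let density_measure0 : density_measure mu mf f0 set0 = 0%E.
Proof. exact: integral_set0. Qed.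

Let density_measure_ge0 A : (0 <= density_measure mu mf f0 A)%E.
Proof. exact: integral_ge0. Qed.

Let density_measure_sigma_additive :
  semi_sigma_additive (density_measure mu mf f0).
Proof. exact: semi_sigma_additive_nng_induced. Qed.

HB.instance Definition _ := isMeasure.Build _ _ _ (density_measure mu mf f0)
  density_measure0 density_measure_ge0 density_measure_sigma_additive.

End density_measure.

Lemma measure_eq_on_rectangles d1 d2 (T1 : measurableType d1)
    (T2 : measurableType d2) (R : realType)
    (m1 m2 : {measure set (T1 * T2) -> \bar R}) : (m1 setT < +oo)%E ->
  (forall A B, measurable A -> measurable B -> m1 (A `*` B) = m2 (A `*` B)) ->
  forall S, measurable S -> m1 S = m2 S.
Proof.
move=> m1oo m1m2 S mS.
pose G := [set A `*` B | A in @measurable _ T1 & B in @measurable _ T2].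
apply: (measure_unique G (fun _ => setT)) => //.
- exact: measurable_prod_measurableType.
- move=> _ _ [A1 mA1 [B1 mB1 <-]] [A2 mA2 [B2 mB2 <-]].
  exists (A1 `&` A2); first exact: measurableI.
  by exists (B1 `&` B2); [exact: measurableI | rewrite setXI].
- by move=> _; exists setT => //; exists setT => //; rewrite setXTT.
- by rewrite bigcup_const.
- by move=> _ [A mA [B mB <-]]; exact: m1m2.
Qed.

Lemma integrable_01valued d (T : measurableType d) (R : realType)
    (mu : {finite_measure set T -> \bar R}) (D : set T) (f : T -> R) :
  measurable D -> measurable_fun setT f -> (forall x, 0 <= f x <= 1) ->
  mu.-integrable D (EFin \o f).
Proof.
move=> mD mf f01; apply: (le_integrable mD (g := EFin \o cst 1)).
- by apply/measurable_EFinP; exact: measurable_funTS.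
- by move=> x _ /=; have /andP[f0 f1] := f01 x; rewrite lee_fin normr1 ger0_norm.
- exact: finite_measure_integrable_cst.
Qed.

Lemma integral_mrestr d (T : measurableType d) (R : realType)
    (mu : {finite_measure set T -> \bar R}) (E A : set T) (mE : measurable E)
    (f : T -> R) : measurable A -> measurable_fun setT f ->
  (forall x, 0 <= f x <= 1) ->
  (\int[mrestr mu mE]_(x in A) (f x)%:E = \int[mu]_(x in A `&` E) (f x)%:E)%E.
Proof.
move=> mA mf f01.
have restr_mu : mrestr mu mE `<< mu.
  apply/null_content_dominatesP => F mF muF0; apply/eqP.
  rewrite eq_le measure_ge0 andbT -muF0 /mrestr.
  by apply: le_measure; rewrite ?inE //; first exact: measurableI; exact: subIsetl.
have intf : (mrestr mu mE).-integrable A (EFin \o f).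
  exact: integrable_01valued.
rewrite -(Radon_Nikodym_change_of_variables restr_mu mA intf).
set RN := Radon_Nikodym _ _.
have RN_indic : ae_eq mu setT RN (EFin \o \1_E).
  apply: integral_ae_eq => //.
  - exact: Radon_Nikodym_integrable.
  - by apply/measurable_EFinP; exact: measurable_indic.
  - move=> F _ mF; rewrite /RN -Radon_Nikodym_integral //.
    by rewrite integral_indic //= /mrestr setIC.
rewrite integral_mkcondr; under eq_integral do rewrite epatch_indic.
apply: ae_eq_integral => //.
- apply: emeasurable_funM; first by apply/measurable_EFinP; exact: measurable_funTS.
  apply: measurable_funTS; apply: (measurable_int mu).
  exact: Radon_Nikodym_integrable.
- apply: emeasurable_funM; first by apply/measurable_EFinP; exact: measurable_funTS.
  by apply/measurable_EFinP; apply: measurable_funTS; exact: measurable_indic.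
- apply: ae_eqe_mul2l; apply: filterS RN_indic => x + _; apply; exact.
Qed.

Section independence.
Local Open Scope ereal_scope.
Context d (T : measurableType d) (R : realType) (P : probability T R).

Definition independent d1 d2 (T1 : measurableType d1) (T2 : measurableType d2)
    (V : T -> T1) (W : T -> T2) :=
  forall A B, measurable A -> measurable B ->
    P (V @^-1` A `&` W @^-1` B) = P (V @^-1` A) * P (W @^-1` B).

Lemma independentC d1 d2 (T1 : measurableType d1) (T2 : measurableType d2)
    (V : T -> T1) (W : T -> T2) :
  independent V W -> independent W V.
Proof. by move=> VW A B mA mB; rewrite setIC VW // muleC. Qed.

Lemma independent_compl d1 d2 d3 (T1 : measurableType d1)
    (T2 : measurableType d2) (S : measurableType d3)
    (V : T -> T1) (W : T -> T2) (f : T1 -> S) :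
  measurable_fun setT f -> independent V W -> independent (f \o V) W.
Proof. by move=> mf VW A B mA mB; exact: VW (measurable_preimage mf mA) mB. Qed.

Lemma measure_fineK (A : set T) : measurable A -> P A = (fine (P A))%:E.
Proof. by move=> mA; rewrite fineK // fin_num_measure. Qed.

Lemma independent_pair d1 d2 d3 d4 (T1 : measurableType d1)
    (T2 : measurableType d2) (S1 : measurableType d3) (S2 : measurableType d4)
    (Z : T -> T1) (e : T -> T2) (f1 : T2 -> S1) (f2 : T2 -> S2) :
  measurable_fun setT Z -> measurable_fun setT e ->
  measurable_fun setT f1 -> measurable_fun setT f2 ->
  independent Z e -> independent (f1 \o e) (f2 \o e) ->
  independent (fun w => (Z w, f1 (e w))) (f2 \o e).
Proof.
move=> mZ me mf1 mf2 hZe hf S E mS mE.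
have mfe2 : measurable_fun setT (f2 \o e) := measurableT_comp mf2 me.
have mF : measurable ((f2 \o e) @^-1` E) := measurable_preimage mfe2 mE.
have mzeta : measurable_fun setT (fun w => (Z w, f1 (e w))).
  exact: measurable_fun_pair mZ (measurableT_comp mf1 me).
pose c : {nonneg R} := NngNum (fine_ge0 (measure_ge0 P ((f2 \o e) @^-1` E))).
pose m1 := image_measure (mrestr P mF) mzeta.
pose m2 := mscale c (image_measure P mzeta).
have : m1 S = m2 S.
  apply: measure_eq_on_rectangles mS.
    by have /fin_numPlt/andP[_ ->] := fin_num_measure m1 setT measurableT.
  move=> A B mA mB; rewrite /m1 /m2 /= /image_measure /pushforward /mrestr /mscale /=.
  have mB' := measurable_preimage mf1 mB; have mE' := measurable_preimage mf2 mE.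
  rewrite [X in P X = _](_ : _ = Z @^-1` A `&` e @^-1` (f1 @^-1` B `&` f2 @^-1` E)).
    2: by rewrite -setIA.
  rewrite hZe //; last exact: measurableI.
  rewrite [X in _ = _ * P X](_ : _ = Z @^-1` A `&` e @^-1` (f1 @^-1` B)) //.
  rewrite hZe // -(measure_fineK mF) muleCA; congr (_ * _).
  by rewrite muleC; exact: hf.
rewrite /m1 /m2 /= /image_measure /pushforward /mrestr /mscale /= -measure_fineK //.
by rewrite muleC.
Qed.

Lemma integral_indep_event d' (T' : measurableType d') (V : T -> T')
    (F : set T) (eta : T' -> R) :
  measurable_fun setT V -> measurable F ->
  (forall A, measurable A -> P (V @^-1` A `&` F) = P (V @^-1` A) * P F) ->
  measurable_fun setT eta -> (forall v, (0 <= eta v <= 1)%R) ->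
  forall D, measurable D ->
  \int[P]_(w in V @^-1` D `&` F) (eta (V w))%:E =
  P F * \int[P]_(w in V @^-1` D) (eta (V w))%:E.
Proof.
move=> mV mF hVF meta eta01 D mD.
have mEeta : measurable_fun D (EFin \o eta).
  by apply/measurable_EFinP; exact: measurable_funTS.
have eta0 : {in D, forall v, 0 <= (EFin \o eta) v}.
  by move=> v _; rewrite lee_fin; case/andP: (eta01 v).
have push := @ge0_integral_pushforward _ _ _ _ R V mV _ D _ mD mEeta eta0.
pose c : {nonneg R} := NngNum (fine_ge0 (measure_ge0 P F)).
rewrite -(integral_mrestr _ mF (measurable_preimage mV mD)
  (measurableT_comp meta mV) (fun w => eta01 (V w))) -push.
rewrite (eq_measure_integral (mscale c (image_measure P mV))); last first.
  move=> A mA _; rewrite /= /image_measure /pushforward /mrestr hVF // muleC.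
  by unfold mscale; rewrite /= -measure_fineK.
rewrite ge0_integral_mscale //=; last first.
  by move=> v _; rewrite lee_fin; case/andP: (eta01 v).
by rewrite push //; congr (_ * _); exact: esym (measure_fineK mF).
Qed.

End independence.

(** * Conditional probabilities *)

Definition clamp01 (R : realType) (x : R) : R := Num.min 1 (Num.max 0 x).

Lemma clamp01_id (R : realType) (x : R) : 0 <= x <= 1 -> clamp01 x = x.
Proof. by case/andP => x0 x1; rewrite /clamp01 (max_idPr x0) (min_idPr x1). Qed.

Lemma clamp01_01 (R : realType) (x : R) : 0 <= clamp01 x <= 1.
Proof. by rewrite /clamp01 le_min ler01 le_max lexx ge_min lexx. Qed.

Lemma measurable_clamp01 (R : realType) : measurable_fun setT (@clamp01 R).
Proof.
apply: measurable_minr; first exact: measurable_cst.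
by apply: measurable_maxr; [exact: measurable_cst | exact: measurable_id].
Qed.

Lemma null_set_of_integral_le0 d (T : measurableType d) (R : realType)
    (mu : {measure set T -> \bar R}) (A : set T) (f : T -> R) :
  measurable A -> measurable_fun A f -> (forall x, A x -> 0 < f x) ->
  (\int[mu]_(x in A) (f x)%:E <= 0)%E -> mu A = 0%E.
Proof.
move=> mA mf f_gt0 int_le0.
have abs_f : (\int[mu]_(x in A) `|(f x)%:E| = \int[mu]_(x in A) (f x)%:E)%E.
  by apply: eq_integral => x /[!inE] Ax; rewrite gee0_abs // lee_fin ltW // f_gt0.
have int_abs0 : (\int[mu]_(x in A) `|(f x)%:E| = 0)%E.
  by apply/eqP; rewrite eq_le integral_ge0 ?andbT // abs_f.
have mEf : measurable_fun A (EFin \o f) by exact/measurable_EFinP.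
have [N [mN N0 AN]] := (ae_eq_integral_abs mu mA mEf).1 int_abs0.
apply/eqP; rewrite eq_le measure_ge0 andbT -N0.
apply: le_measure; rewrite ?inE //.
by move=> x Ax; apply: AN => /= /(_ Ax) /eqP; rewrite eqe gt_eqF // f_gt0.
Qed.

Lemma measurable_lt d (T : measurableType d) (R : realType) (f g : T -> R) :
  measurable_fun setT f -> measurable_fun setT g -> measurable [set x | f x < g x].
Proof.
move=> mf mg.
by have := measurable_fun_ltr mf mg measurableT (Y := [set true]) I; rewrite setTI.
Qed.

Section conditional_probability.
Local Open Scope ereal_scope.
Context d d' (T : measurableType d) (T' : measurableType d') (R : realType).
Variables (P : probability T R) (V : T -> T').
Hypothesis mV : measurable_fun setT V.

Definition is_cond_prob (F : set T) (phi : T' -> R) :=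
  measurable_fun setT phi /\ forall C, measurable C ->
    P (F `&` V @^-1` C) = \int[P]_(w in V @^-1` C) (phi (V w))%:E.

Section clamp.
Variables (F : set T) (phi : T' -> R).
Hypotheses (mF : measurable F) (hphi : is_cond_prob F phi).

Let mphiV : measurable_fun setT (phi \o V).
Proof. exact: measurableT_comp hphi.1 mV. Qed.

Let below0 := V @^-1` [set v | (phi v < 0)%R].
Let above1 := V @^-1` [set v | (1 < phi v)%R].

Let mphi_lt0 : measurable [set v | (phi v < 0)%R].
Proof. by apply: measurable_lt hphi.1 _; exact: measurable_cst. Qed.

Let mphi_gt1 : measurable [set v | (1 < phi v)%R].
Proof. by apply: measurable_lt _ hphi.1; exact: measurable_cst. Qed.

Let mbelow0 : measurable below0. Proof. exact: measurable_preimage mV mphi_lt0. Qed.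

Let mabove1 : measurable above1. Proof. exact: measurable_preimage mV mphi_gt1. Qed.

Let below0_null : P below0 = 0.
Proof.
apply: (null_set_of_integral_le0 (f := fun w => - phi (V w))%R) => //.
- by apply: measurable_funTS; exact: measurable_funN.
- by move=> w; rewrite /below0 /= oppr_gt0.
rewrite -oppe_ge0 -integral_ge0N; last first.
  by move=> w /= w0; rewrite lee_fin oppr_ge0 ltW.
under eq_integral do rewrite EFinN oppeK.
by rewrite -hphi.2 ?measure_ge0.
Qed.

Let above1_null : P above1 = 0.
Proof.
apply: (null_set_of_integral_le0 (f := fun w => phi (V w) - 1)%R) => //.
- by apply: measurable_funTS; apply: measurable_funB.
- by move=> w; rewrite /above1 /= subr_gt0.
have split_int : \int[P]_(w in above1) (phi (V w))%:E =
    \int[P]_(w in above1) (phi (V w) - 1)%:E + \int[P]_(w in above1) (cst 1 w).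
  rewrite -ge0_integralD //.
  - by apply: eq_integral => w _ /=; rewrite -EFinD subrK.
  - by move=> w /= w1; rewrite lee_fin subr_ge0 ltW.
  - by apply/measurable_EFinP; apply: measurable_funTS; apply: measurable_funB.
rewrite integral_cst // mul1e -hphi.2 // in split_int.
have : P (F `&` above1) <= P above1.
  by apply: le_measure; rewrite ?inE //; first exact: measurableI; exact: subIsetr.
rewrite split_int -[X in _ <= X](add0e (P above1)) leeD2rE //.
by rewrite fin_num_measure.
Qed.

Lemma is_cond_prob_clamp01_ae : {ae P, forall w, phi (V w) = clamp01 (phi (V w))}.
Proof.
exists (below0 `|` above1); split; first exact: measurableU.
  by rewrite (measureU0 mbelow0 mabove1 above1_null); exact: below0_null.
move=> w /= phiV; case: (ltP (phi (V w)) 0%R) => [|phiV0]; first by left.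
case: (ltP 1%R (phi (V w))) => [|phiV1]; first by right.
by exfalso; apply: phiV; rewrite clamp01_id // phiV0 phiV1.
Qed.

Lemma is_cond_prob_clamp01 : is_cond_prob F (fun v => clamp01 (phi v)).
Proof.
split; first exact: measurableT_comp (@measurable_clamp01 R) hphi.1.
move=> C mC; rewrite hphi.2 //; apply: ae_eq_integral.
- exact: measurable_preimage.
- by apply/measurable_EFinP; exact: measurable_funTS.
- apply/measurable_EFinP; apply: measurable_funTS.
  exact: measurableT_comp (@measurable_clamp01 R) mphiV.
- by apply: filterS is_cond_prob_clamp01_ae => w phiV _; rewrite {1}phiV.
Qed.

End clamp.

Lemma is_cond_prob_scale (F1 F2 : set T) (c : R) (phi : T' -> R) :
  measurable F2 ->
  (forall C, measurable C -> P (F1 `&` V @^-1` C) = c%:E * P (F2 `&` V @^-1` C)) ->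
  is_cond_prob F2 phi -> is_cond_prob F1 (fun v => c * clamp01 (phi v))%R.
Proof.
move=> mF2 F12 hphi; have [mphi01 phi01E] := is_cond_prob_clamp01 mF2 hphi.
split; first by apply: measurable_funM; [exact: measurable_cst | exact: mphi01].
move=> C mC; rewrite F12 // phi01E // -integralZl //; first exact: measurable_preimage.
exact: integrable_01valued (measurable_preimage mV mC) (measurableT_comp mphi01 mV)
  (fun=> clamp01_01 _).
Qed.

Lemma ae_eq_of_integrals_01 (phi1 phi2 : T' -> R) :
  measurable_fun setT phi1 -> measurable_fun setT phi2 ->
  (forall v, (0 <= phi1 v <= 1)%R) -> (forall v, (0 <= phi2 v <= 1)%R) ->
  (forall C, measurable C -> \int[P]_(w in V @^-1` C) (phi1 (V w))%:E =
                             \int[P]_(w in V @^-1` C) (phi2 (V w))%:E) ->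
  {ae P, forall w, phi1 (V w) = phi2 (V w)}.
Proof.
move=> mphi1 mphi2 phi1_01 phi2_01 int12.
pose mu := image_measure P mV.
have int_image (phi : T' -> R) C : measurable_fun setT phi ->
    (forall v, (0 <= phi v <= 1)%R) -> measurable C ->
    \int[mu]_(v in C) (phi v)%:E = \int[P]_(w in V @^-1` C) (phi (V w))%:E.
  move=> mphi phi01 mC; apply: (@ge0_integral_pushforward _ _ _ _ R V mV) => //.
  - by apply/measurable_EFinP; exact: measurable_funTS.
  - by move=> v _; rewrite lee_fin; case/andP: (phi01 v).
have : ae_eq mu setT (EFin \o phi1) (EFin \o phi2).
  apply: integral_ae_eq => //.
  - exact: integrable_01valued.
  - exact/measurable_EFinP.
  - by move=> E _ mE; rewrite !int_image // int12.
case=> N [mN muN0 sN]; exists (V @^-1` N); split => //.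
  exact: measurable_preimage.
by move=> w /= neq; apply: sN => /(_ I) [].
Qed.

Lemma is_cond_prob_unique (F : set T) (phi1 phi2 : T' -> R) : measurable F ->
  is_cond_prob F phi1 -> is_cond_prob F phi2 ->
  {ae P, forall w, phi1 (V w) = phi2 (V w)}.
Proof.
move=> mF h1 h2; have c1 := is_cond_prob_clamp01 mF h1.
have c2 := is_cond_prob_clamp01 mF h2.
have := ae_eq_of_integrals_01 c1.1 c2.1 (fun=> clamp01_01 _) (fun=> clamp01_01 _).
move=> /(_ (fun C mC => etrans (esym (c1.2 C mC)) (c2.2 C mC))) clamp_eq.
apply: (filterS3 _ _ (is_cond_prob_clamp01_ae mF h1) (is_cond_prob_clamp01_ae mF h2)
  clamp_eq) => w e1 e2 e12.
by rewrite e1 e2.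
Qed.

Lemma is_cond_prob_exists (F : set T) : measurable F ->
  exists phi, is_cond_prob F phi /\ forall v, (0 <= phi v <= 1)%R.
Proof.
move=> mF; pose mu := image_measure P mV.
pose nu := image_measure (mrestr P mF) mV.
have nu_mu : charge_of_finite_measure nu `<< mu.
  apply/null_content_dominatesP => A mA muA0; apply/eqP.
  rewrite eq_le measure_ge0 andbT -muA0 /= /nu /mu /image_measure /pushforward.
  apply: le_measure; rewrite ?inE /mrestr; last exact: subIsetl.
    exact: measurableI (measurable_preimage mV mA) mF.
  exact: measurable_preimage.
pose f := Radon_Nikodym (charge_of_finite_measure nu) mu.
have intf : mu.-integrable setT f := Radon_Nikodym_integrable nu_mu.
have fE v : f v = (fine (f v))%:E by rewrite fineK // Radon_Nikodym_fin_num.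
have mfinef : measurable_fun setT (fine \o f).
  exact: measurableT_comp (measurable_int _ intf).
suff hf : is_cond_prob F (fine \o f).
  by exists (fun v => clamp01 (fine (f v))); split;
    [exact: is_cond_prob_clamp01 | move=> v; exact: clamp01_01].
split => // C mC; rewrite setIC.
transitivity (charge_of_finite_measure nu C) => //.
rewrite (Radon_Nikodym_integral nu_mu mC) -/f.
under eq_integral do rewrite fE.
have intfV : P.-integrable (V @^-1` C) ((EFin \o (fine \o f)) \o V).
  apply/integrableP; split.
    by apply: measurable_funTS; apply: measurableT_comp => //; exact/measurable_EFinP.
  have /integrableP[_] := integrableS measurableT mC (@subsetT _ C) intf.
  under eq_integral do rewrite fE.
  rewrite (@ge0_integral_pushforward _ _ _ _ R V mV) //.
  by apply: measurable_funTS; apply: measurableT_comp => //; exact/measurable_EFinP.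
by rewrite (integral_pushforward mV _ intfV mC) //; exact/measurable_EFinP.
Qed.
End conditional_probability.

Section conditional_independence.
Local Open Scope ereal_scope.
Context d d1 d2 (T : measurableType d) (T1 : measurableType d1)
  (T2 : measurableType d2) (R : realType) (P : probability T R).
Variables (Z : T -> T1) (X : T -> T2) (F : set T).
Hypotheses (mZ : measurable_fun setT Z) (mX : measurable_fun setT X)
  (mF : measurable F).
Hypothesis F_X_cond_indep : forall G, measurable G -> exists g h : T1 -> R,
  [/\ is_cond_prob P Z F g, is_cond_prob P Z (X @^-1` G) h &
    forall C, measurable C -> P (F `&` X @^-1` G `&` Z @^-1` C) =
      \int[P]_(w in Z @^-1` C) (g (Z w) * h (Z w))%:E].

Let measurable_prodZ (g h : T1 -> R) : measurable_fun setT g ->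
  measurable_fun setT h -> measurable_fun setT (fun w => (g (Z w) * h (Z w))%:E).
Proof.
move=> mg mh; apply/measurable_EFinP.
by apply: measurable_funM; [exact: measurableT_comp mg mZ |
  exact: measurableT_comp mh mZ].
Qed.

Lemma cond_indep_scale (G G' : set T2) (c : R) : measurable G -> measurable G' ->
  (forall C, measurable C ->
    P (X @^-1` G `&` Z @^-1` C) = c%:E * P (X @^-1` G' `&` Z @^-1` C)) ->
  P (F `&` X @^-1` G) = c%:E * P (F `&` X @^-1` G').
Proof.
move=> mG mG' GG'.
have mXG := measurable_preimage mX mG; have mXG' := measurable_preimage mX mG'.
have [g [h [cg ch gh]]] := F_X_cond_indep mG.
have [g' [h' [cg' ch' gh']]] := F_X_cond_indep mG'.
have cg'1 := is_cond_prob_clamp01 mZ mF cg'.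
have ch'1 := is_cond_prob_clamp01 mZ mXG' ch'.
have ch'c := is_cond_prob_scale mZ mXG' GG' ch'.
have gh_eq : {ae P, forall w, (g (Z w) * h (Z w))%R =
    (c * (clamp01 (g' (Z w)) * clamp01 (h' (Z w))))%R}.
  apply: (filterS3 _ _ (is_cond_prob_unique mZ mF cg cg')
    (is_cond_prob_unique mZ mXG ch ch'c) (is_cond_prob_clamp01_ae mZ mF cg')).
  by move=> w -> -> g'1; rewrite {1}g'1 mulrCA.
have gh'_eq : {ae P, forall w, (g' (Z w) * h' (Z w))%R =
    (clamp01 (g' (Z w)) * clamp01 (h' (Z w)))%R}.
  apply: (filterS2 _ _ (is_cond_prob_clamp01_ae mZ mF cg')
    (is_cond_prob_clamp01_ae mZ mXG' ch')).
  by move=> w g'1 h'1; rewrite {1}g'1 {1}h'1.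
have mgh'1 : measurable_fun setT
    (fun w => clamp01 (g' (Z w)) * clamp01 (h' (Z w)))%R.
  by apply: measurable_funM; [exact: measurableT_comp cg'1.1 mZ |
    exact: measurableT_comp ch'1.1 mZ].
have int01 : P.-integrable setT
    (EFin \o fun w => clamp01 (g' (Z w)) * clamp01 (h' (Z w)))%R.
  apply: integrable_01valued => // w; have /andP[g'0 g'1] := clamp01_01 (g' (Z w)).
  by have /andP[h'0 h'1] := clamp01_01 (h' (Z w)); rewrite mulr_ge0 // mulr_ile1.
have := gh _ measurableT; have := gh' _ measurableT.
rewrite !preimage_setT !setIT => -> ->.
transitivity (\int[P]_w (c%:E * (clamp01 (g' (Z w)) * clamp01 (h' (Z w)))%:E)).
  apply: ae_eq_integral => //; first exact: measurable_prodZ cg.1 ch.1.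
    by under eq_fun do rewrite -EFinM; apply/measurable_EFinP;
      exact: measurable_funM (measurable_cst _) mgh'1.
  by apply: filterS gh_eq => w -> _; rewrite EFinM.
rewrite integralZl //; congr (_ * _); apply: ae_eq_integral => //.
- exact/measurable_EFinP.
- exact: measurable_prodZ cg'.1 ch'.1.
- by apply: filterS gh'_eq => w -> _.
Qed.

End conditional_independence.

Section cond_prob_pair.
Local Open Scope ereal_scope.
Context d d1 d2 (T : measurableType d) (T1 : measurableType d1)
  (T2 : measurableType d2) (R : realType) (P : probability T R).
Variables (V : T -> T1) (W : T -> T2) (F : set T) (eta : T1 -> R).
Hypotheses (mV : measurable_fun setT V) (mW : measurable_fun setT W)
  (mF : measurable F).
Hypothesis VW_indep : independent P V W.
Hypothesis F_W_indep : forall D E, measurable D -> measurable E ->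
  P (F `&` (V @^-1` D `&` W @^-1` E)) = P (F `&` V @^-1` D) * P (W @^-1` E).
Hypotheses (eta_cond : is_cond_prob P V F eta)
  (eta01 : forall v, (0 <= eta v <= 1)%R).

Lemma is_cond_prob_pair : is_cond_prob P (fun w => (V w, W w)) F (fun p => eta p.1).
Proof.
have mxi : measurable_fun setT (fun w => (V w, W w)) by exact: measurable_fun_pair.
split; first exact: measurableT_comp eta_cond.1 measurable_fst.
have metaV : measurable_fun setT (fun w => (eta (V w))%:E).
  by apply/measurable_EFinP; exact: measurableT_comp eta_cond.1 mV.
have etaV0 w : 0 <= (eta (V w))%:E by rewrite lee_fin; case/andP: (eta01 (V w)).
pose m1 := image_measure (mrestr P mF) mxi.
pose m2 := image_measure (density_measure P metaV etaV0) mxi.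
move=> S mS; rewrite setIC; apply: (@measure_eq_on_rectangles _ _ _ _ _ m1 m2) => //.
  by have /fin_numPlt/andP[_ ->] := fin_num_measure m1 setT measurableT.
move=> D E mD mE; rewrite /m1 /m2 /= /image_measure /pushforward /mrestr /=.
rewrite /density_measure /= setIC.
rewrite [X in P (_ `&` X)](_ : _ = V @^-1` D `&` W @^-1` E) // F_W_indep //.
rewrite (@integral_indep_event _ _ _ P _ _ V) //.
- by rewrite (eta_cond.2 _ mD) muleC.
- exact: measurable_preimage.
- by move=> A mA; exact: VW_indep.
- exact: eta_cond.1.
Qed.

End cond_prob_pair.

(** * The factor model *)

Section factor_matrices.
Variables (R : rcfType) (d K : nat) (B : 'M[R]_(d, K)) (lambda : 'I_K -> R).

Definition diag_invsqrt := diag_mx (\row_i (Num.sqrt (lambda i))^-1).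

Definition orth_proj := 1%:M - B *m invmx (B^T *m B) *m B^T.

Lemma trmx_mul_diag_invsqrt : (B *m diag_invsqrt)^T = diag_invsqrt *m B^T.
Proof. by rewrite trmx_mul tr_diag_mx. Qed.

Hypotheses (BtB : B^T *m B = diag_mx (\row_i lambda i))
  (lambda_gt0 : forall i, 0 < lambda i).

Lemma diag_invsqrt_sqr : diag_invsqrt *m diag_invsqrt = diag_mx (\row_i (lambda i)^-1).
Proof.
rewrite mulmx_diag; congr diag_mx; apply/rowP => i; rewrite !mxE.
by rewrite -invfM -expr2 sqr_sqrtr // ltW.
Qed.

Let diag_mulV : diag_mx (\row_i lambda i) *m diag_mx (\row_i (lambda i)^-1) = 1%:M.
Proof.
rewrite mulmx_diag; apply/matrixP => i j; rewrite !mxE.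
by case: (i == j); rewrite ?mulr1n ?mulr0n // mulfV // gt_eqF.
Qed.

Lemma unitmx_BtB : B^T *m B \in unitmx.
Proof. by rewrite BtB; exact: (mulmx1_unit diag_mulV).1. Qed.

Lemma invmx_BtB : invmx (B^T *m B) = diag_invsqrt *m diag_invsqrt.
Proof.
rewrite diag_invsqrt_sqr -[RHS]mul1mx -(mulVmx unitmx_BtB) -mulmxA.
by rewrite [X in _ *m (X *m _)]BtB diag_mulV mulmx1.
Qed.

Lemma orth_proj_mulB : orth_proj *m B = 0.
Proof. by rewrite mulmxBl mul1mx -!mulmxA (mulVmx unitmx_BtB) mulmx1 subrr. Qed.

Lemma orth_decomposition (x : 'cV[R]_d) :
  (B *m diag_invsqrt) *m ((B *m diag_invsqrt)^T *m x) + orth_proj *m x = x.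
Proof.
rewrite trmx_mul_diag_invsqrt /orth_proj invmx_BtB mulmxBl mul1mx !mulmxA.
by rewrite addrC subrK.
Qed.

End factor_matrices.

Section factor_model.
Variables (R : realType) (dT : measure_display) (T : measurableType dT).
Variables (P : probability T R) (K d : nat) (B : 'M[R]_(d, K)) (lambda : 'I_K -> R).
Variables (Z : T -> cvB R K) (Y : T -> R) (e : T -> cvB R d).
Hypotheses (BtB : B^T *m B = diag_mx (\row_i lambda i))
  (lambda_gt0 : forall i, 0 < lambda i).
Hypotheses (mZ : measurable_fun setT Z) (mY : measurable_fun setT Y)
  (me : measurable_fun setT e).
Hypothesis Z_e_indep : independent P Z e.
Hypothesis proj_indep :
  independent P (fun w => orth_proj B *m e w : cvB R d) (fun w => B^T *m e w : cvB R K).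

Let U := B *m diag_invsqrt lambda.
Let Q := orth_proj B.
Let X w : cvB R d := B *m Z w + e w.
Let V w : cvB R K := U^T *m X w.
Let W w : cvB R d := Q *m e w.
Let Y1 := Y @^-1` [set 1].

Hypothesis Y_X_cond_indep : forall G : set (cvB R d), measurable G ->
  exists g h : cvB R K -> R,
  [/\ is_cond_prob P Z Y1 g, is_cond_prob P Z (X @^-1` G) h &
    forall C, measurable C -> P (Y1 `&` X @^-1` G `&` Z @^-1` C) =
      (\int[P]_(w in Z @^-1` C) (g (Z w) * h (Z w))%:E)%E].

Let mX : measurable_fun setT X.
Proof. exact: measurable_addmx (measurable_mulmx _ mZ) me. Qed.

Let mV : measurable_fun setT V.
Proof. exact: measurable_mulmx _ mX. Qed.

Let mW : measurable_fun setT W.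
Proof. exact: measurable_mulmx _ me. Qed.

Let mY1 : measurable Y1.
Proof. exact: measurable_preimage mY (measurable_set1 _). Qed.

Let orth_proj_X w : Q *m X w = W w.
Proof. by rewrite mulmxDr mulmxA (orth_proj_mulB BtB lambda_gt0) mul0mx add0r. Qed.

Let X_decomposition w : U *m V w + W w = X w.
Proof. by rewrite -orth_proj_X; exact: orth_decomposition. Qed.

Let ZV_W_indep : independent P (fun w => (Z w, V w)) W.
Proof.
pose f (p : cvB R K * cvB R K) : cvB R K * cvB R K :=
  (p.1, (U^T *m B) *m p.1 + diag_invsqrt lambda *m p.2).
have mf : measurable_fun setT f.
  apply: measurable_fun_pair; first exact: measurable_fst.
  by apply: measurable_addmx; exact: measurable_mulmx.
have -> : (fun w => (Z w, V w)) = f \o (fun w => (Z w, B^T *m e w : cvB R K)).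
  by apply/funext => w; rewrite /f /V /X /U /= trmx_mul_diag_invsqrt mulmxDr !mulmxA.
apply: independent_compl mf (independent_pair mZ me (measurable_mulmxl B^T)
  (measurable_mulmxl (orth_proj B)) Z_e_indep (independentC proj_indep)).
Qed.

Let Y1_W_indep D E : measurable D -> measurable E ->
  P (Y1 `&` (V @^-1` D `&` W @^-1` E)) = (P (Y1 `&` V @^-1` D) * P (W @^-1` E))%E.
Proof.
move=> mD mE.
pose G' := (fun x : cvB R d => U^T *m x : cvB R K) @^-1` D.
pose G := G' `&` (fun x : cvB R d => Q *m x : cvB R d) @^-1` E.
have mG' : measurable G' := measurable_preimage (measurable_mulmxl _) mD.
have mG : measurable G.
  exact: measurableI mG' (measurable_preimage (measurable_mulmxl _) mE).
have XG : X @^-1` G = V @^-1` D `&` W @^-1` E.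
  by apply/seteqP; split => w; rewrite /G /G' /= orth_proj_X.
have mWE := measurable_preimage mW mE.
rewrite -XG (cond_indep_scale mZ mX mY1 Y_X_cond_indep
  (c := fine (P (W @^-1` E))) mG mG').
  by rewrite -measure_fineK // muleC.
move=> C mC; rewrite XG -measure_fineK // setIAC.
have := ZV_W_indep (measurableX mC mD) mE.
rewrite [X in P (X `&` _) = _ -> _](_ : _ = V @^-1` D `&` Z @^-1` C);
  last by rewrite setIC.
by move=> ->; rewrite muleC setIC.
Qed.

Lemma factor_model_regression : exists eta : cvB R K -> R,
  [/\ measurable_fun setT eta, forall v, 0 <= eta v <= 1 &
    forall C : set (cvB R d), measurable C ->
      P (Y1 `&` X @^-1` C) = (\int[P]_(w in X @^-1` C) (eta (U^T *m X w))%:E)%E].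
Proof.
have [eta [eta_cond eta01]] := is_cond_prob_exists P mV mY1.
exists eta; split => //; first exact: eta_cond.1.
move=> C mC.
have VW_cond := is_cond_prob_pair mV mW mY1
  (independent_compl measurable_snd ZV_W_indep) Y1_W_indep eta_cond eta01.
pose S := [set p : cvB R K * cvB R d | C (U *m p.1 + p.2)].
have mS : measurable S.
  apply: measurable_preimage mC; apply: measurable_addmx => //.
  exact: measurable_mulmx _ measurable_fst.
have XS : (fun w => (V w, W w)) @^-1` S = X @^-1` C.
  by apply/seteqP; split => w; rewrite /S /= X_decomposition.
by rewrite -XS; exact: VW_cond.2 S mS.
Qed.

End factor_model.

Lemma bigcap_preimage_if (J : eqType) (S U : Type) (A : J -> U -> S) (j : J)
    (F : set S) :
  \bigcap_(i in [set: J]) (A i @^-1` (if i == j then F else setT)) = A j @^-1` F.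
Proof.
apply/seteqP; split => [w /(_ j I)|w Fw i _]; first by rewrite eqxx.
by case: eqP => [->|].
Qed.

Section model_definitions.
Context (R : realType) (dT : measure_display) (T : measurableType dT)
  (P : probability T R).

Lemma cond_prob_versionP n (V : T -> 'cV[R]_n) (F : set T) (g : 'cV[R]_n -> R) :
  cond_prob_version P V F g <-> is_cond_prob P (V : T -> cvB R n) F g.
Proof. by rewrite /cond_prob_version cborel_funP. Qed.

Lemma mutual_indep_independent K d m (Z : T -> 'cV[R]_K)
    (E : 'I_m -> T -> 'cV[R]_d) (j : 'I_m) :
  mutual_indep P Z E -> independent P (Z : T -> cvB R K) (E j : T -> cvB R d).
Proof.
move=> ZE C F mC mF.
have := ZE C (fun i => if i == j then F else setT) mC.
rewrite bigcap_preimage_if => -> //; last first.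
  by move=> i; case: (i == j) => //; exact: (@measurableT _ (cvB R d)).
rewrite (bigD1 j) //= eqxx big1 ?mule1 // => i /negbTE ->.
by rewrite preimage_setT probability_setT.
Qed.

Lemma cond_indep_view K d m (Y : T -> R) (X : 'I_m -> T -> 'cV[R]_d)
    (Z : T -> 'cV[R]_K) (A : set R) (j : 'I_m) :
  cond_indep P Y X Z -> measurable A ->
  forall G : set (cvB R d), measurable G -> exists g h : cvB R K -> R,
  [/\ is_cond_prob P (Z : T -> cvB R K) (Y @^-1` A) g,
    is_cond_prob P (Z : T -> cvB R K) (X j @^-1` G) h &
    forall C : set (cvB R K), measurable C ->
      P (Y @^-1` A `&` X j @^-1` G `&` Z @^-1` C) =
      (\int[P]_(w in Z @^-1` C) (g (Z w) * h (Z w))%:E)%E].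
Proof.
move=> YXZ mA G mG.
have [|g [h [/cond_prob_versionP cg [/cond_prob_versionP ch gh]]]] :=
  YXZ A (fun i => if i == j then G else setT) mA.
  by move=> i; case: (i == j) => //; exact: (@measurableT _ (cvB R d)).
by exists g, h; rewrite bigcap_preimage_if in ch gh.
Qed.

End model_definitions.

Unset Implicit Arguments.

Theorem proposition1 (R : realType) (dT : measure_display) (T : measurableType dT)
  (P : probability T R) (K d m : nat)
  (B : 'M[R]_(d, K)) (lambda : 'I_K -> R)
  (Z : T -> 'cV[R]_K) (Y : T -> R)
  (eps : 'I_m -> T -> 'cV[R]_d) (X : 'I_m -> T -> 'cV[R]_d)
  (* latent vector and label *)
  (hZ : rvec Z) (hY : measurable_fun setT Y)
  (hYval : forall w, Y w = 1 \/ Y w = -1)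
  (* the conditional distribution of Z given Y = y has a density *)
  (hZdens : forall (y : R) (N : set 'cV[R]_K), cborel N -> lebesgue_null N ->
      P (Z @^-1` N `&` Y @^-1` [set y]) = 0%E)
  (* Var(Z) = I_K *)
  (hZint : forall i, P.-integrable setT (fun w => (Z w i ord0)%:E))
  (hZint2 : forall i, P.-integrable setT (fun w => ((Z w i ord0) ^+ 2)%:E))
  (hZvar : forall i j, covariance P (fun w => Z w i ord0) (fun w => Z w j ord0)
                       = ((i == j)%:R)%:E)
  (* factor form of the views *)
  (hX : forall j w, X j w = B *m Z w + eps j w)
  (heps : forall j, rvec (eps j))
  (heps_dens : forall j, has_density P (eps j))
  (heps_int : forall j i, P.-integrable setT (fun w => (eps j w i ord0)%:E))
  (heps_mean : forall j i, 'E_P[fun w => eps j w i ord0]%E = 0%E)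
  (* noise independent of Z and across views *)
  (hindep : mutual_indep P Z eps)
  (* Y conditionally independent of the views given Z *)
  (hcond : cond_indep P Y X Z)
  (* B^T B = Lambda = diag(lambda_1 >= ... >= lambda_K > 0) *)
  (hBB : B^T *m B = diag_mx (\row_i lambda i))
  (hlam_pos : forall i, 0 < lambda i)
  (hlam_dec : forall i j : 'I_K, (i <= j)%N -> lambda j <= lambda i)
  (* (I - B (B^T B)^{-1} B^T) eps is independent of B^T eps *)
  (hproj : forall j, indep2 P
      (fun w => (1%:M - B *m invmx (B^T *m B) *m B^T) *m eps j w)
      (fun w => B^T *m eps j w)) :
  let U := B *m diag_mx (\row_i (Num.sqrt (lambda i))^-1) in
  forall j : 'I_m,
  exists (eta : 'cV[R]_d -> R) (eta_t fstar_t : 'cV[R]_K -> R),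
    (* eta is (a version of) the regression function x |-> P(Y = 1 | X_j = x) *)
    cond_prob_version P (X j) (Y @^-1` [set 1]) eta /\
    (forall x, 0 <= eta x <= 1) /\
    (forall x, eta x = eta_t (U^T *m x)) /\
    (* the Bayes rule f*(x) = 1 if eta(x) >= 1/2, -1 otherwise *)
    (forall x, (if 2^-1 <= eta x then 1 else -1) = fstar_t (U^T *m x)).
Proof.
move=> U j.
have X_j : X j = (fun w => B *m Z w + eps j w) by apply/funext => w; rewrite hX.
have Y_X_cond_indep := cond_indep_view j hcond (measurable_set1 1).
rewrite X_j in Y_X_cond_indep.
have [eta_t [meta_t eta_t01 eta_tE]] := factor_model_regression hBB hlam_pos
  (measurable_cvB hZ) hY (measurable_cvB (heps j)) (mutual_indep_independent j hindep)
  (hproj j) Y_X_cond_indep.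
exists (fun x => eta_t (U^T *m x)), eta_t, (fun v => if 2^-1 <= eta_t v then 1 else -1).
split; last by split=> [x|]; [exact: eta_t01 | split].
apply/cond_prob_versionP; split; last by rewrite X_j; exact: eta_tE.
exact: measurableT_comp meta_t (measurable_mulmxl _).
Qed.
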